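(* Let $L>0$ and let $\alpha,\beta:\mathbb{R}\to\mathbb{R}^2$ be smooth $L$-periodic maps with $\alpha'$ nowhere zero, $\langle\beta,\alpha'\rangle = 0$ and $|\alpha'|^2+|\beta|^2=1$. Define \[ \gamma(t,s) = \tfrac12\big(\alpha(s+t)+\alpha(s-t)\big) + \tfrac12\int_{s-t}^{s+t}\beta(\xi)\,d\xi, \] $a = \alpha'+\beta$, $b = \alpha'-\beta$, and smooth functions $\zeta,\eta$ by $a' = \zeta\, a^\perp$, $b' = \eta\, b^\perp$. Suppose that $(t_0,s_0)$ satisfies $\gamma_{,s}(t_0,s_0) = 0$, i.e. $a(s_0+t_0)+b(s_0-t_0) = 0$, and that \[ \zeta(s_0+t_0) \neq \eta(s_0-t_0). \] Then the unit tangent map $U(t_0,\cdot) = \gamma_{,s}(t_0,\cdot)/|\gamma_{,s}(t_0,\cdot)|$ of the curve $s\mapsto\gamma(t_0,s)$ is discontinuous at $s_0$; more specifically, it reverses direction across $s_0$: the one-sided limits $\lim_{s\to s_0^\pm}U(t_0,s)$ exist and are opposite unit vectors.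
   Context: For $v=(v_1,v_2)\in\mathbb{R}^2$, $v^\perp = (-v_2,v_1)$. Since $|a|=|b|=1$, the functions $\zeta,\eta$ are well defined. Note $2\gamma_{,s}(t,s) = a(s+t)+b(s-t)$, and $U(t,s)$ is defined wherever $\gamma_{,s}(t,s)\ne 0$. *)

From Stdlib Require Import Reals.
From Coquelicot Require Import Coquelicot.
Open Scope R_scope.

Definition smooth (f : R -> R) : Prop :=
  forall (n : nat) (x : R), ex_derive (Derive_n f n) x.

Definition periodic (L : R) (f : R -> R) : Prop :=
  forall x, f (x + L) = f x.

Definition gamma_c (alpha_i beta_i : R -> R) (t s : R) : R :=
  (alpha_i (s + t) + alpha_i (s - t)) / 2 + RInt beta_i (s - t) (s + t) / 2.

Definition gamma_s_c (alpha_i beta_i : R -> R) (t s : R) : R :=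
  Derive (fun s' => gamma_c alpha_i beta_i t s') s.

(* one component (the one given by alpha_i, beta_i) of the unit tangent
   U(t,s) = gamma_{,s}(t,s) / |gamma_{,s}(t,s)| *)
Definition U_c (alpha_i beta_i alpha1 beta1 alpha2 beta2 : R -> R) (t s : R) : R :=
  gamma_s_c alpha_i beta_i t s /
  sqrt ((gamma_s_c alpha1 beta1 t s) ^ 2 + (gamma_s_c alpha2 beta2 t s) ^ 2).

(** Write [g = gamma_{,s}(t0, .)].  Because [g s0 = 0], we have [b(s0-t0) = -a(s0+t0)],
    so [2 g'(s0) = a'(s0+t0) + b'(s0-t0) = (zeta - eta) a^perp], which is nonzero since
    [|a|^2 = |alpha'|^2 + |beta|^2 = 1].  A planar curve vanishing at [s0] with nonzero
    derivative [D] factors as [g s = (s - s0) Q s] with [Q s -> D]; hence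
    [g/|g| = sgn (s - s0) Q/|Q|] tends to [D/|D|] from the right and to [-D/|D|] from
    the left. *)
From Stdlib Require Import Reals Lra.
From Coquelicot Require Import Coquelicot.
Open Scope R_scope.

Lemma is_lim_diff_quot (G : R -> R) (s0 D : R) :
  is_derive G s0 D -> G s0 = 0 -> is_lim (fun s => G s / (s - s0)) s0 D.
Proof.
  intros HD G0 P [eps HP].
  apply is_derive_Reals in HD.
  destruct (HD eps (cond_pos eps)) as [delta Hdelta].
  exists delta; intros s Hs Hne; change R in s; apply HP.
  assert (Hh : s - s0 <> 0) by lra.
  specialize (Hdelta (s - s0) Hh Hs).
  rewrite G0 in Hdelta; replace (s0 + (s - s0)) with s in Hdelta by ring.
  replace (G s / (s - s0)) with ((G s - 0) / (s - s0)) by (unfold Rdiv; ring).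
  exact Hdelta.
Qed.

Lemma is_lim_pow2 (f : R -> R) (x : Rbar) (l : R) :
  is_lim f x l -> is_lim (fun y => f y ^ 2) x (l ^ 2).
Proof.
  intros Hf; apply (is_lim_comp_continuous f (fun z => z ^ 2)); [exact Hf |].
  apply (ex_derive_continuous (fun z : R => z ^ 2)); auto_derive; easy.
Qed.

Lemma is_lim_normalize (Q Q1 Q2 : R -> R) (s0 D D1 D2 : R) :
  is_lim Q s0 D -> is_lim Q1 s0 D1 -> is_lim Q2 s0 D2 -> 0 < D1 ^ 2 + D2 ^ 2 ->
  is_lim (fun s => Q s / sqrt (Q1 s ^ 2 + Q2 s ^ 2)) s0 (D / sqrt (D1 ^ 2 + D2 ^ 2)).
Proof.
  intros HQ HQ1 HQ2 HD.
  assert (Hnorm : is_lim (fun s => sqrt (Q1 s ^ 2 + Q2 s ^ 2)) s0 (sqrt (D1 ^ 2 + D2 ^ 2))).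
  { apply is_lim_comp_continuous; [| apply continuous_sqrt].
    apply (is_lim_plus _ _ _ (D1 ^ 2) (D2 ^ 2)); try apply is_lim_pow2; easy. }
  apply (is_lim_div _ _ _ D (sqrt (D1 ^ 2 + D2 ^ 2))); try easy.
  intros E; injection E; now apply Rgt_not_eq, sqrt_lt_R0.
Qed.

Lemma normalize_scale (h q q1 q2 : R) :
  h <> 0 -> 0 < q1 ^ 2 + q2 ^ 2 ->
  h * q / sqrt ((h * q1) ^ 2 + (h * q2) ^ 2)
  = h / Rabs h * (q / sqrt (q1 ^ 2 + q2 ^ 2)).
Proof.
  intros Hh Hq.
  replace ((h * q1) ^ 2 + (h * q2) ^ 2) with (Rabs h ^ 2 * (q1 ^ 2 + q2 ^ 2))
    by (rewrite pow2_abs; ring).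
  rewrite sqrt_mult_alt by apply pow2_ge_0.
  rewrite sqrt_pow2 by apply Rabs_pos.
  assert (Rabs h <> 0) by now apply Rabs_no_R0.
  assert (sqrt (q1 ^ 2 + q2 ^ 2) <> 0) by now apply Rgt_not_eq, sqrt_lt_R0.
  field; auto.
Qed.

Lemma filterlim_at_right_sign_mult (f V : R -> R) (s0 l : R) (eps : posreal) :
  is_lim V s0 l ->
  (forall s, 0 < Rabs (s - s0) < eps -> f s = (s - s0) / Rabs (s - s0) * V s) ->
  filterlim f (at_right s0) (locally l).
Proof.
  intros HV Hf.
  apply (filterlim_ext_loc V).
  - exists eps; intros s Hs Hlt.
    rewrite Hf by (split; [apply Rabs_pos_lt; lra | exact Hs]).
    rewrite Rabs_right by lra; field; lra.
  - intros P HP; destruct (HV P HP) as [e He].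
    exists e; intros s Hs Hlt; apply He; auto; lra.
Qed.

Lemma filterlim_at_left_sign_mult (f V : R -> R) (s0 l : R) (eps : posreal) :
  is_lim V s0 l ->
  (forall s, 0 < Rabs (s - s0) < eps -> f s = (s - s0) / Rabs (s - s0) * V s) ->
  filterlim f (at_left s0) (locally (- l)).
Proof.
  intros HV Hf.
  apply is_lim_opp in HV.
  apply (filterlim_ext_loc (fun s => - V s)).
  - exists eps; intros s Hs Hlt.
    rewrite Hf by (split; [apply Rabs_pos_lt; lra | exact Hs]).
    rewrite Rabs_left by lra; field; lra.
  - intros P HP; destruct (HV P HP) as [e He].
    exists e; intros s Hs Hlt; apply He; auto; lra.
Qed.

Lemma unit_vector_one_sided_limits (g1 g2 : R -> R) (s0 D1 D2 : R) :
  is_derive g1 s0 D1 -> is_derive g2 s0 D2 -> g1 s0 = 0 -> g2 s0 = 0 ->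
  0 < D1 ^ 2 + D2 ^ 2 ->
  (exists d, 0 < d /\ forall s, 0 < Rabs (s - s0) < d -> g1 s <> 0 \/ g2 s <> 0) /\
  (exists u1 u2 : R,
     u1 ^ 2 + u2 ^ 2 = 1 /\
     filterlim (fun s => g1 s / sqrt (g1 s ^ 2 + g2 s ^ 2)) (at_right s0) (locally u1) /\
     filterlim (fun s => g2 s / sqrt (g1 s ^ 2 + g2 s ^ 2)) (at_right s0) (locally u2) /\
     filterlim (fun s => g1 s / sqrt (g1 s ^ 2 + g2 s ^ 2)) (at_left s0) (locally (- u1)) /\
     filterlim (fun s => g2 s / sqrt (g1 s ^ 2 + g2 s ^ 2)) (at_left s0) (locally (- u2))).
Proof.
  intros Hg1 Hg2 g1s0 g2s0 HD.
  set (Q1 := fun s => g1 s / (s - s0)); set (Q2 := fun s => g2 s / (s - s0)).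
  assert (HQ1 : is_lim Q1 s0 D1) by now apply is_lim_diff_quot.
  assert (HQ2 : is_lim Q2 s0 D2) by now apply is_lim_diff_quot.
  assert (HQ : is_lim (fun s => Q1 s ^ 2 + Q2 s ^ 2) s0 (D1 ^ 2 + D2 ^ 2))
    by (apply (is_lim_plus _ _ _ (D1 ^ 2) (D2 ^ 2)); try apply is_lim_pow2; easy).
  destruct (HQ (fun z => 0 < z) (open_gt 0 _ HD)) as [eps Heps].
  assert (Hunit : forall s, 0 < Rabs (s - s0) < eps -> forall g : R -> R,
      g s / sqrt (g1 s ^ 2 + g2 s ^ 2)
      = (s - s0) / Rabs (s - s0) * (g s / (s - s0) / sqrt (Q1 s ^ 2 + Q2 s ^ 2))).
  { intros s [Hs0 Hs] g.
    assert (Hne : s <> s0) by (intros E; rewrite E, Rminus_diag, Rabs_R0 in Hs0; lra).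
    rewrite <- normalize_scale by (try apply Heps; auto; lra).
    unfold Q1, Q2.
    assert (Hfactor : forall f : R -> R, (s - s0) * (f s / (s - s0)) = f s)
      by (intros f; field; lra).
    now rewrite !Hfactor. }
  set (N := sqrt (D1 ^ 2 + D2 ^ 2)).
  assert (HN : 0 < N) by now apply sqrt_lt_R0.
  split.
  { exists eps; split; [apply cond_pos |].
    intros s Hs.
    destruct (Req_dec (g1 s) 0) as [E1 | E1]; [right; intros E2 | now left].
    assert (Hpos : 0 < Q1 s ^ 2 + Q2 s ^ 2)
      by (apply Heps; [apply Hs | intros E; rewrite E, Rminus_diag, Rabs_R0 in Hs; lra]).
    unfold Q1, Q2 in Hpos; rewrite E1, E2 in Hpos; unfold Rdiv in Hpos.
    rewrite !Rmult_0_l in Hpos; lra. }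
  exists (D1 / N), (D2 / N); split.
  { replace ((D1 / N) ^ 2 + (D2 / N) ^ 2) with ((D1 ^ 2 + D2 ^ 2) / N ^ 2) by (field; lra).
    unfold N; rewrite pow2_sqrt; [field |]; lra. }
  pose proof (is_lim_normalize _ _ _ _ _ _ _ HQ1 HQ1 HQ2 HD) as HU1.
  pose proof (is_lim_normalize _ _ _ _ _ _ _ HQ2 HQ1 HQ2 HD) as HU2.
  repeat split.
  - exact (filterlim_at_right_sign_mult _ _ _ _ eps HU1 (fun s Hs => Hunit s Hs g1)).
  - exact (filterlim_at_right_sign_mult _ _ _ _ eps HU2 (fun s Hs => Hunit s Hs g2)).
  - exact (filterlim_at_left_sign_mult _ _ _ _ eps HU1 (fun s Hs => Hunit s Hs g1)).
  - exact (filterlim_at_left_sign_mult _ _ _ _ eps HU2 (fun s Hs => Hunit s Hs g2)).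
Qed.

Lemma continuous_of_smooth (f : R -> R) (x : R) : smooth f -> continuous f x.
Proof. intros Hf; apply (ex_derive_continuous (V := R_NormedModule)), (Hf 0%nat). Qed.

Lemma gamma_s_c_eq (al be : R -> R) (t s : R) : smooth al -> smooth be ->
  gamma_s_c al be t s = (Derive al (s + t) + Derive al (s - t) + be (s + t) - be (s - t)) / 2.
Proof.
  intros Hal Hbe; unfold gamma_s_c, gamma_c.
  apply is_derive_unique; auto_derive.
  - repeat split; try apply (Hal 0%nat).
    + apply (ex_RInt_continuous (V := R_CompleteNormedModule)); intros; now apply continuous_of_smooth.
    + apply filter_forall; intros; apply continuity_pt_filterlim, continuous_of_smooth, Hbe.
    + apply filter_forall; intros; apply continuity_pt_filterlim, continuous_of_smooth, Hbe.
  - change (fun x => al x) with al; replace (s + - t) with (s - t) by ring; field.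
Qed.

Lemma is_derive_gamma_s_c (al be : R -> R) (t s : R) : smooth al -> smooth be ->
  is_derive (gamma_s_c al be t) s
    ((Derive (fun y => Derive al y + be y) (s + t)
      + Derive (fun y => Derive al y - be y) (s - t)) / 2).
Proof.
  intros Hal Hbe.
  apply (is_derive_ext
    (fun s => ((fun y => Derive al y + be y) (s + t) + (fun y => Derive al y - be y) (s - t)) / 2)).
  { intros r; rewrite gamma_s_c_eq by assumption; simpl; lra. }
  assert (Hdiff : forall x, ex_derive (Derive al) x /\ ex_derive be x)
    by (intros x; split; [apply (Hal 1%nat) | apply (Hbe 0%nat)]).
  auto_derive.
  - repeat split; apply Hdiff.
  - rewrite Derive_plus, Derive_minus by apply Hdiff.
    change (fun x => Derive al x) with (Derive al); change (fun x : R => be x) with be.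
    replace (s + - t) with (s - t) by ring; field.
Qed.

Lemma sum_orthogonal_norm2 (x1 x2 y1 y2 : R) :
  y1 * x1 + y2 * x2 = 0 -> x1 ^ 2 + x2 ^ 2 + y1 ^ 2 + y2 ^ 2 = 1 ->
  (x1 + y1) ^ 2 + (x2 + y2) ^ 2 = 1.
Proof. intros; nra. Qed.

Lemma rotation_rates_half_sum_pos (a1 a2 b1 b2 z w : R) :
  a1 + b1 = 0 -> a2 + b2 = 0 -> a1 ^ 2 + a2 ^ 2 = 1 -> z <> w ->
  0 < ((z * - a2 + w * - b2) / 2) ^ 2 + ((z * a1 + w * b1) / 2) ^ 2.
Proof.
  intros Hb1 Hb2 Ha Hzw.
  replace b1 with (- a1) by lra; replace b2 with (- a2) by lra.
  replace (((z * - a2 + w * - - a2) / 2) ^ 2 + ((z * a1 + w * - a1) / 2) ^ 2)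
    with ((z - w) ^ 2 * (a1 ^ 2 + a2 ^ 2) / 4) by field.
  rewrite Ha; assert (0 < (z - w) ^ 2) by (apply pow2_gt_0; lra); lra.
Qed.

Theorem lemma2p4 (L : R) (al1 al2 be1 be2 zeta eta : R -> R) (t0 s0 : R) :
  0 < L ->
  smooth al1 -> smooth al2 -> smooth be1 -> smooth be2 ->
  periodic L al1 -> periodic L al2 -> periodic L be1 -> periodic L be2 ->
  (forall x, Derive al1 x <> 0 \/ Derive al2 x <> 0) ->
  (forall x, be1 x * Derive al1 x + be2 x * Derive al2 x = 0) ->
  (forall x, (Derive al1 x) ^ 2 + (Derive al2 x) ^ 2 + (be1 x) ^ 2 + (be2 x) ^ 2 = 1) ->
  (forall x,
     Derive (fun y => Derive al1 y + be1 y) x = zeta x * (- (Derive al2 x + be2 x)) /\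
     Derive (fun y => Derive al2 y + be2 y) x = zeta x * (Derive al1 x + be1 x)) ->
  (forall x,
     Derive (fun y => Derive al1 y - be1 y) x = eta x * (- (Derive al2 x - be2 x)) /\
     Derive (fun y => Derive al2 y - be2 y) x = eta x * (Derive al1 x - be1 x)) ->
  gamma_s_c al1 be1 t0 s0 = 0 -> gamma_s_c al2 be2 t0 s0 = 0 ->
  zeta (s0 + t0) <> eta (s0 - t0) ->
  (exists d, 0 < d /\ forall s, 0 < Rabs (s - s0) < d ->
     gamma_s_c al1 be1 t0 s <> 0 \/ gamma_s_c al2 be2 t0 s <> 0) /\
  (exists u1 u2 : R,
     u1 ^ 2 + u2 ^ 2 = 1 /\
     filterlim (fun s => U_c al1 be1 al1 be1 al2 be2 t0 s) (at_right s0) (locally u1) /\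
     filterlim (fun s => U_c al2 be2 al1 be1 al2 be2 t0 s) (at_right s0) (locally u2) /\
     filterlim (fun s => U_c al1 be1 al1 be1 al2 be2 t0 s) (at_left s0) (locally (- u1)) /\
     filterlim (fun s => U_c al2 be2 al1 be1 al2 be2 t0 s) (at_left s0) (locally (- u2))).
Proof.
  intros _ Hal1 Hal2 Hbe1 Hbe2 _ _ _ _ _ Horth Hnorm Ha Hb Z1 Z2 Hzeta.
  unfold U_c; eapply unit_vector_one_sided_limits;
    try (apply is_derive_gamma_s_c; assumption); try assumption.
  rewrite gamma_s_c_eq in Z1, Z2 by assumption.
  destruct (Ha (s0 + t0)) as [-> ->], (Hb (s0 - t0)) as [-> ->].
  apply rotation_rates_half_sum_pos; try lra.
  now apply sum_orthogonal_norm2.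
Qed.
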